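(* Let $\mathcal H$ be a complex Hilbert space and $A,B,X\in\mathcal B(\mathcal H)$ with $B\neq0$ and $X$ positive. Let $\{x_n\}\subset\mathcal H$ with $\|x_n\|=1$ and $w(AXB)=\lim_{n\to\infty}|\langle AXBx_n,x_n\rangle|$. Then $$w(AXB)\le\frac{\|X\|}{2}\left(\big\||A^*|^2+|B|^2\big\|-\lim_{n\to\infty}\frac{\|A^*x_n\|}{2\|Bx_n\|}\inf_{\lambda\in\mathbb C}\|(B-\lambda A^* )x_n\|^2\right)\le\frac{\|X\|}{2}\big\||A^*|^2+|B|^2\big\|$$ (the limit being assumed to exist). In particular, taking $X=I$, $$w(AB)\le\frac12\big\||A^*|^2+|B|^2\big\|-\lim_{n\to\infty}\frac{\|A^*x_n\|}{4\|Bx_n\|}\inf_{\lambda\in\mathbb C}\|(B-\lambda A^* )x_n\|^2\le\frac12\big\||A^*|^2+|B|^2\big\|,$$ where now $\{x_n\}$ is a sequence of unit vectors with $w(AB)=\lim_n|\langle ABx_n,x_n\rangle|$.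
   Context: $|S|=(S^*S)^{1/2}$ for $S\in\mathcal B(\mathcal H)$; $\|\cdot\|$ is the operator norm; $w(S)=\sup\{|\langle Sx,x\rangle|:\|x\|=1\}$ is the numerical radius. *)

From HB Require Import structures.
From mathcomp Require Import all_boot all_order all_algebra.
From mathcomp Require Import all_classical all_reals all_analysis.
From mathcomp Require Export complex.
Set Implicit Arguments. Unset Strict Implicit. Unset Printing Implicit Defensive.
Import Order.TTheory GRing.Theory Num.Theory.
Import numFieldNormedType.Exports.
Local Open Scope ring_scope.
Local Open Scope classical_set_scope.

Section Hilbert.
Variables (R : realType) (H : lmodType R[i]) (ip : H -> H -> R[i]).

Definition is_inner_product : Prop :=
  [/\ (forall (a : R[i]) (x y z : H), ip (a *: x + y) z = a * ip x z + ip y z),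
      (forall x y : H, ip x y = conjc (ip y x)),
      (forall x : H, 0 <= ip x x) &
      (forall x : H, ip x x = 0 -> x = 0)].

Definition hnorm (x : H) : R := Num.sqrt (complex.Re (ip x x)).

Definition hcomplete : Prop :=
  forall u : nat -> H,
    (forall e : R, 0 < e -> exists N : nat, forall m n : nat,
        (N <= m)%N -> (N <= n)%N -> hnorm (u m - u n) < e) ->
    exists l : H, (fun n => hnorm (u n - l)) @ \oo --> (0 : R).

Definition bounded_op (T : H -> H) : Prop :=
  (forall (a : R[i]) (x y : H), T (a *: x + y) = a *: T x + T y) /\
  exists M : R, forall x : H, hnorm (T x) <= M * hnorm x.

Definition is_adjoint (T S : H -> H) : Prop :=
  forall x y : H, ip (T x) y = ip x (S y).

Definition positive_op (T : H -> H) : Prop :=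
  forall x : H, 0 <= ip (T x) x.

Definition unit_sphere : set H := [set x | hnorm x = 1].

Definition opnorm (T : H -> H) : R :=
  sup [set hnorm (T x) | x in unit_sphere].

Definition numrad (T : H -> H) : R :=
  sup [set ComplexField.Normc.normc (ip (T x) x) | x in unit_sphere].

Definition inf_dist2 (B As : H -> H) (x : H) : R :=
  inf [set hnorm (B x - l *: As x) ^+ 2 | l in [set: R[i]]].

End Hilbert.

(* For a unit vector x put a = A^* x and b = B x, so that <A X B x, x> = <X b, a>.
   A positive X is self-adjoint, hence <X(u+v), u+v> - <X(u-v), u-v> = 4 Re <X u, v>
   and so 4 Re <X u, v> <= ||X|| ||u + v||^2.  Taking for u and v copies of b and a,
   rotated by the phase of <X b, a> and rescaled to equal length, yields the
   Buzano-type bound |<X b, a>| <= ||X||/2 (||a|| ||b|| + |<b, a>|).  The orthogonal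
   projection of b on a gives inf_l ||b - l a||^2 <= ||b||^2 - |<b, a>|^2 / ||a||^2,
   and (p - q)^2 + (p q - c)^2 / (2 p q) >= 0 turns these into
   |<X b, a>| <= ||X||/2 (||a||^2 + ||b||^2 - ||a|| / (2 ||b||) inf_l ||b - l a||^2),
   where ||a||^2 + ||b||^2 = <(A A^* + B^* B) x, x> <= ||A A^* + B^* B||.  One passes
   to the limit along x_n; the second estimate is the case X = I. *)

From HB Require Import structures.
From mathcomp Require Import all_boot all_order all_algebra.
From mathcomp Require Import all_classical all_reals all_analysis.
From mathcomp Require Import complex.
From mathcomp Require Import ring lra.
Import Order.TTheory GRing.Theory Num.Theory.
Import numFieldNormedType.Exports.
Local Open Scope ring_scope.
Local Open Scope classical_set_scope.

Set Implicit Arguments. Unset Strict Implicit. Unset Printing Implicit Defensive.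

Import ComplexField.Normc.
(* Unqualified [Re] would be [Num.Theory.Re], whose value lies in [R[i]]. *)
Local Notation Re := complex.Re.

Section ComplexNorm.
Local Open Scope complex_scope.
Variable R : rcfType.
Implicit Types (z : R[i]) (r : R).

Lemma normc_ge0 z : 0 <= normc z.
Proof. by case: z => a b; exact: sqrtr_ge0. Qed.

Lemma Re_le_normc z : Re z <= normc z.
Proof.
case: z => a b /=; apply: le_trans (ler_norm a) _.
by rewrite -sqrtr_sqr ler_sqrt ?addr_ge0 ?sqr_ge0 // lerDl sqr_ge0.
Qed.

Lemma normc_conj z : normc (conjc z) = normc z.
Proof. by case: z => a b /=; rewrite sqrrN. Qed.

Lemma normc_real r : 0 <= r -> normc r%:C = r.
Proof. by move=> r_ge0 /=; rewrite expr0n addr0 sqrtr_sqr ger0_norm. Qed.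

Lemma mulcJ_normc z : z * conjc z = (normc z ^+ 2)%:C.
Proof.
case: z => a b; simpc; rewrite sqr_sqrtr ?addr_ge0 ?sqr_ge0 //.
by congr Complex; ring.
Qed.

End ComplexNorm.

Section InnerProduct.
Local Open Scope complex_scope.
Variables (R : realType) (H : lmodType R[i]) (ip : H -> H -> R[i]).
Hypothesis hip : is_inner_product ip.
Local Notation hn := (hnorm ip).

Lemma ipDl x y z : ip (x + y) z = ip x z + ip y z.
Proof. by case: hip => h _ _ _; have := h 1 x y z; rewrite scale1r mul1r. Qed.

Lemma ip0l z : ip 0 z = 0.
Proof. by apply: (addrI (ip 0 z)); rewrite -ipDl !addr0. Qed.

Lemma ipZl a x z : ip (a *: x) z = a * ip x z.
Proof. by case: hip => h _ _ _; rewrite -[a *: x]addr0 h ip0l addr0. Qed.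

Lemma ipNl x z : ip (- x) z = - ip x z.
Proof. by rewrite -scaleN1r ipZl mulN1r. Qed.

Lemma ipC x y : ip x y = conjc (ip y x).
Proof. by case: hip. Qed.

Lemma ipDr x y z : ip x (y + z) = ip x y + ip x z.
Proof. by rewrite ipC ipDl rmorphD /= -!ipC. Qed.

Lemma ipZr a x z : ip z (a *: x) = conjc a * ip z x.
Proof. by rewrite ipC ipZl rmorphM /= -ipC. Qed.

Lemma ip0r z : ip z 0 = 0.
Proof. by rewrite ipC ip0l conjc0. Qed.

Lemma ipNr x z : ip z (- x) = - ip z x.
Proof. by rewrite ipC ipNl rmorphN /= -ipC. Qed.

Lemma ip_ge0 x : 0 <= ip x x.
Proof. by case: hip. Qed.

Lemma Re_ipC x y : Re (ip y x) = Re (ip x y).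
Proof. by rewrite (ipC y x); case: (ip x y). Qed.

Lemma ipxx x : ip x x = (hn x ^+ 2)%:C.
Proof.
have := ip_ge0 x; rewrite /hnorm; case: (ip x x) => a b.
by rewrite lecE /= => /andP[/eqP -> a_ge0]; rewrite sqr_sqrtr.
Qed.

Lemma hnorm_ge0 x : 0 <= hn x.
Proof. exact: sqrtr_ge0. Qed.

Lemma hnorm_gt0 x : hn x != 0 -> 0 < hn x.
Proof. by rewrite lt0r hnorm_ge0 andbT. Qed.

Lemma hnorm_eq0 x : hn x = 0 -> x = 0.
Proof. by case: hip => _ _ _ h hx; apply: h; rewrite ipxx hx expr0n. Qed.

Lemma hnorm0 : hn 0 = 0.
Proof. by rewrite /hnorm ip0l /= sqrtr0. Qed.

Lemma hnormZ a x : hn (a *: x) = normc a * hn x.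
Proof.
have hn2 y : hn y ^+ 2 = Re (ip y y) by rewrite ipxx.
rewrite -[LHS]ger0_norm ?hnorm_ge0 // -sqrtr_sqr hn2 ipZl ipZr mulrA mulrC.
rewrite mulcJ_normc ipxx -rmorphM /= -exprMn.
by rewrite sqrtr_sqr ger0_norm ?mulr_ge0 ?normc_ge0 ?hnorm_ge0 // mulrC.
Qed.

Lemma hnormD_sqr x y :
  hn (x + y) ^+ 2 = hn x ^+ 2 + hn y ^+ 2 + 2 * Re (ip x y).
Proof.
apply: complexI; rewrite -ipxx !rmorphD /= ipDl !ipDr -!ipxx (ipC y x).
by rewrite rmorphM /= rmorph_nat -addcJ; ring.
Qed.

Lemma hnorm_sub_proj_sqr b a : hn a != 0 ->
  hn (b - ((hn a ^+ 2)^-1%:C * ip b a) *: a) ^+ 2 =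
  hn b ^+ 2 - normc (ip b a) ^+ 2 / hn a ^+ 2.
Proof.
move=> a_neq0; apply: complexI; rewrite -ipxx ipDl !ipDr !ipNl !ipNr !ipZl !ipZr.
rewrite !ipxx (ipC a b); move: a_neq0; move: (hn a) (hn b) => p q p_neq0.
case: (ip b a) => w1 w2; rewrite -!complexr0; simpc.
by rewrite /= sqr_sqrtr ?addr_ge0 ?sqr_ge0 //; congr Complex; field.
Qed.

Lemma normc_ip_le x y : normc (ip x y) <= hn x * hn y.
Proof.
have [/hnorm_eq0 ->|y_neq0] := eqVneq (hn y) 0.
  by rewrite ip0r hnorm0 mulr0 normc0.
have := sqr_ge0 (hn (x - ((hn y ^+ 2)^-1%:C * ip x y) *: y)).
rewrite hnorm_sub_proj_sqr // subr_ge0 ler_pdivrMr ?exprn_gt0 ?hnorm_gt0 //.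
by rewrite -exprMn ler_sqr ?nnegrE ?normc_ge0 ?mulr_ge0 ?hnorm_ge0.
Qed.

Lemma hnormD x y : hn (x + y) <= hn x + hn y.
Proof.
rewrite -ler_sqr ?nnegrE ?addr_ge0 ?hnorm_ge0 // hnormD_sqr sqrrD.
rewrite [leRHS]addrAC lerD2l mulr_natl lerMn2r /=.
exact: le_trans (Re_le_normc _) (normc_ip_le _ _).
Qed.

Lemma inf_dist2_ge0 B As x : 0 <= inf_dist2 ip B As x.
Proof.
apply: lb_le_inf; first by exists (hn (B x - 0 *: As x) ^+ 2), 0.
by move=> _ [l _ <-]; apply: sqr_ge0.
Qed.

Lemma inf_dist2_le B As x : hn (As x) != 0 ->
  inf_dist2 ip B As x <= hn (B x) ^+ 2 - normc (ip (B x) (As x)) ^+ 2 / hn (As x) ^+ 2.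
Proof.
move=> Ax_neq0; rewrite -hnorm_sub_proj_sqr //; apply: ge_inf.
  by exists 0 => _ [l _ <-]; apply: sqr_ge0.
by exists ((hn (As x) ^+ 2)^-1%:C * ip (B x) (As x)).
Qed.

Lemma cvg_inf_dist2_ge0 (k : R) B As (x : nat -> H) L : 0 <= k ->
  (fun n => hn (As (x n)) / (k * hn (B (x n))) * inf_dist2 ip B As (x n)) @ \oo --> L ->
  0 <= L.
Proof.
move=> k_ge0 hL; apply: (ler_cvg_to (cvg_cst 0) hL); apply: nearW => n.
by rewrite mulr_ge0 ?inf_dist2_ge0 ?divr_ge0 ?mulr_ge0 ?hnorm_ge0.
Qed.

End InnerProduct.

Section BoundedOperators.
Local Open Scope complex_scope.
Variables (R : realType) (H : lmodType R[i]) (ip : H -> H -> R[i]).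
Hypothesis hip : is_inner_product ip.
Local Notation hn := (hnorm ip).

Section BoundedOperator.
Variable T : H -> H.
Hypothesis hT : bounded_op ip T.

Lemma bounded_opD x y : T (x + y) = T x + T y.
Proof. by case: hT => lin _; have := lin 1 x y; rewrite !scale1r. Qed.

Lemma bounded_op0 : T 0 = 0.
Proof. by apply: (addrI (T 0)); rewrite -bounded_opD !addr0. Qed.

Lemma bounded_opZ a x : T (a *: x) = a *: T x.
Proof. by case: hT => lin _; have := lin a x 0; rewrite !addr0 bounded_op0 addr0. Qed.

Lemma bounded_opN x : T (- x) = - T x.
Proof. by rewrite -scaleN1r bounded_opZ scaleN1r. Qed.

Lemma hnorm_unit_le_opnorm x : hn x = 1 -> hn (T x) <= opnorm ip T.
Proof.
move=> x1; apply: ub_le_sup; last by exists x.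
case: hT => _ [K hK]; exists K => _ [y y1 <-].
by have := hK y; rewrite y1 mulr1.
Qed.

Lemma opnorm_ge0 : 0 <= opnorm ip T.
Proof.
have [[x x1]|no_unit] := pselect (exists x, hn x = 1).
  exact: le_trans (hnorm_ge0 _ _) (hnorm_unit_le_opnorm x1).
rewrite /opnorm (_ : [set _ | x in _] = set0) ?sup0 //.
by apply/seteqP; split => // _ [x x1 <-]; apply: no_unit; exists x.
Qed.

Lemma hnorm_le_opnorm x : hn (T x) <= opnorm ip T * hn x.
Proof.
have [/(hnorm_eq0 hip) ->|x_neq0] := eqVneq (hn x) 0.
  by rewrite bounded_op0 (hnorm0 hip) mulr0.
have x_gt0 := hnorm_gt0 x_neq0.
have normc_inv : normc (hn x)^-1%:C = (hn x)^-1 by rewrite normc_real ?invr_ge0 ?ltW.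
have u1 : hn ((hn x)^-1%:C *: x) = 1 by rewrite (hnormZ hip) normc_inv mulVf.
have := hnorm_unit_le_opnorm u1; rewrite bounded_opZ (hnormZ hip) normc_inv.
by rewrite mulrC ler_pdivrMr.
Qed.

Lemma Re_ip_le_opnorm x : Re (ip (T x) x) <= opnorm ip T * hn x ^+ 2.
Proof.
apply: le_trans (Re_le_normc _) _; apply: le_trans (normc_ip_le hip _ _) _.
by rewrite expr2 mulrA ler_wpM2r ?hnorm_ge0 ?hnorm_le_opnorm.
Qed.

End BoundedOperator.

Lemma bounded_op_comp S T :
  bounded_op ip S -> bounded_op ip T -> bounded_op ip (fun x => S (T x)).
Proof.
move=> hS hT; split=> [a x y|]; first by rewrite (bounded_opD hT) (bounded_opZ hT)
  (bounded_opD hS) (bounded_opZ hS).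
exists (opnorm ip S * opnorm ip T) => x; rewrite -mulrA.
exact: le_trans (hnorm_le_opnorm hS _) (ler_wpM2l (opnorm_ge0 hS) (hnorm_le_opnorm hT _)).
Qed.

Lemma bounded_op_add S T :
  bounded_op ip S -> bounded_op ip T -> bounded_op ip (fun x => S x + T x).
Proof.
move=> hS hT; split=> [a x y|].
  by rewrite (bounded_opD hT) (bounded_opZ hT) (bounded_opD hS) (bounded_opZ hS)
    scalerDr addrACA.
exists (opnorm ip S + opnorm ip T) => x; rewrite mulrDl.
exact: le_trans (hnormD hip _ _) (lerD (hnorm_le_opnorm hS _) (hnorm_le_opnorm hT _)).
Qed.

Lemma adjoint_bounded T S : bounded_op ip T -> is_adjoint ip T S -> bounded_op ip S.
Proof.
move=> hT hTS; split=> [a x y|].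
  have ip_d z : ip z (S (a *: x + y) - (a *: S x + S y)) = 0.
    rewrite (ipDr hip) (ipNr hip) !(ipDr hip) !(ipZr hip) -!hTS.
    by rewrite !(ipDr hip) !(ipZr hip) subrr.
  have [_ _ _ ip_def] := hip; apply/eqP; rewrite -subr_eq0; apply/eqP/ip_def/ip_d.
exists (opnorm ip T) => y.
have [->|Sy_neq0] := eqVneq (hn (S y)) 0; first by rewrite mulr_ge0 ?opnorm_ge0 ?hnorm_ge0.
rewrite -(ler_pM2r (hnorm_gt0 Sy_neq0)) -expr2.
have -> : hn (S y) ^+ 2 = Re (ip (T (S y)) y) by rewrite hTS (ipxx hip).
apply: le_trans (Re_le_normc _) _; apply: le_trans (normc_ip_le hip _ _) _.
by rewrite mulrAC ler_wpM2r ?hnorm_ge0 ?hnorm_le_opnorm.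
Qed.

Lemma sqr_hnorm_adjD_le A B As Bs x :
  bounded_op ip A -> bounded_op ip B -> is_adjoint ip A As -> is_adjoint ip B Bs ->
  hn (As x) ^+ 2 + hn (B x) ^+ 2 <= opnorm ip (fun y => A (As y) + Bs (B y)) * hn x ^+ 2.
Proof.
move=> hA hB hAs hBs.
have hG : bounded_op ip (fun y => A (As y) + Bs (B y)).
  apply: bounded_op_add; first exact: bounded_op_comp hA (adjoint_bounded hA hAs).
  exact: bounded_op_comp (adjoint_bounded hB hBs) hB.
apply: le_trans (Re_ip_le_opnorm hG x).
by rewrite (ipDl hip) raddfD /= hAs (Re_ipC hip x) -hBs !(ipxx hip).
Qed.

End BoundedOperators.

Lemma mulD_le_sqrD_sub (R : realFieldType) (p q c I : R) : 0 < p -> 0 < q ->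
  I <= q ^+ 2 - c ^+ 2 / p ^+ 2 -> p * q + c <= p ^+ 2 + q ^+ 2 - p / (2 * q) * I.
Proof.
move=> p_gt0 q_gt0 hI.
have k_ge0 : 0 <= p / (2 * q) by rewrite divr_ge0 ?mulr_ge0 ?ltW.
apply: le_trans (_ : _ <= p ^+ 2 + q ^+ 2 - p / (2 * q) * (q ^+ 2 - c ^+ 2 / p ^+ 2)) _.
  rewrite -subr_ge0 (_ : _ - _ = (p - q) ^+ 2 + (p * q - c) ^+ 2 / (2 * (p * q))).
    by rewrite addr_ge0 ?sqr_ge0 ?divr_ge0 ?sqr_ge0 ?mulr_ge0 ?ltW.
  by field; rewrite ?mulf_neq0 ?gt_eqF.
by rewrite lerD2l lerN2 ler_wpM2l.
Qed.

Section PositiveOperator.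
Local Open Scope complex_scope.
Variables (R : realType) (H : lmodType R[i]) (ip : H -> H -> R[i]).
Hypothesis hip : is_inner_product ip.
Local Notation hn := (hnorm ip).
Variable X : H -> H.
Hypotheses (hX : bounded_op ip X) (hXpos : positive_op ip X).

Lemma positive_op_selfadjoint : is_adjoint ip X X.
Proof.
move=> u v; rewrite (ipC hip u).
(* Polarization: <X w, w> is real for w = u, v, u + v and u + 'i v. *)
have := hXpos (u + v); have := hXpos (u + 'i *: v); have := hXpos u; have := hXpos v.
rewrite !(bounded_opD hX) (bounded_opZ hX) !(ipDl hip) !(ipDr hip) !(ipZl hip) !(ipZr hip).
case: (ip (X u) u) => a1 a2; case: (ip (X v) v) => b1 b2.
case: (ip (X u) v) => c1 c2; case: (ip (X v) u) => d1 d2; simpc.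
move=> /andP[/eqP h1 _] /andP[/eqP h2 _] /andP[/eqP h3 _] /andP[/eqP h4 _].
by congr Complex; lra.
Qed.

Variable M : R.
Hypotheses (hM0 : 0 <= M) (hM : forall z, Re (ip (X z) z) <= M * hn z ^+ 2).

Lemma Re_ip_posop_le u v : 4 * Re (ip (X u) v) <= M * hn (u + v) ^+ 2.
Proof.
have Re_ge0 (z : R[i]) : 0 <= z -> 0 <= Re z by rewrite lecE => /andP[].
have := hM (u + v); have := Re_ge0 _ (hXpos (u - v)).
have XvuE : Re (ip (X v) u) = Re (ip (X u) v) by rewrite (Re_ipC hip) positive_op_selfadjoint.
rewrite !(bounded_opD hX) (bounded_opN hX) !(ipDl hip) !(ipDr hip) !(ipNl hip) !(ipNr hip).
by rewrite !raddfD !raddfN /= XvuE; lra.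
Qed.

Lemma normc_ip_posop_le b a :
  normc (ip (X b) a) <= M * (hn a * hn b + normc (ip b a)) / 2.
Proof.
set w := ip (X b) a.
have [w0|w_neq0] := eqVneq w 0.
  rewrite w0 normc0 divr_ge0 // mulr_ge0 // addr_ge0 ?normc_ge0 //.
  by rewrite mulr_ge0 ?hnorm_ge0.
have a_neq0 : hn a != 0.
  by apply: contra_neq w_neq0 => /(hnorm_eq0 hip) a0; rewrite /w a0 (ip0r hip).
have b_neq0 : hn b != 0.
  apply: contra_neq w_neq0 => /(hnorm_eq0 hip) b0.
  by rewrite /w b0 (bounded_op0 hX) (ip0l hip).
have r_gt0 : 0 < normc w.
  by rewrite lt0r normc_ge0 andbT; apply: contra_neq w_neq0 => /eq0_normc.
move: (hnorm_gt0 a_neq0) (hnorm_gt0 b_neq0) r_gt0.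
set p := hn a; set q := hn b; set r := normc w; set c := normc (ip b a).
move=> p_gt0 q_gt0 r_gt0; have qr_ge0 : 0 <= q * r by rewrite mulr_ge0 ?ltW.
pose u := (p%:C * conjc w) *: b; pose v := (q * r)%:C *: a.
have Xuv : Re (ip (X u) v) = p * q * r ^+ 3.
  rewrite (bounded_opZ hX) (ipZl hip) (ipZr hip) conjc_real -/w.
  by rewrite mulrACA [conjc w * w]mulrC mulcJ_normc -/r -!rmorphM /=; ring.
have hu : hn u = p * q * r.
  by rewrite (hnormZ hip) normcM (normc_real (ltW p_gt0)) normc_conj -/r -/q mulrAC.
have hv : hn v = p * q * r by rewrite (hnormZ hip) (normc_real qr_ge0) -/p mulrC mulrA.
have uv : Re (ip u v) <= p * q * r * (r * c).
  rewrite (ipZl hip) (ipZr hip); apply: le_trans (Re_le_normc _) _.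
  rewrite !normcM normc_conj conjc_real (normc_real (ltW p_gt0)) (normc_real qr_ge0).
  by rewrite -/r -/c (_ : p * q * r * (r * c) = p * r * (q * r * c)) //; ring.
have k_gt0 : 0 < 2 * p * q * r ^+ 2 by rewrite !mulr_gt0 // exprn_gt0.
suff : (2 * p * q * r ^+ 2) * (2 * r) <= (2 * p * q * r ^+ 2) * (M * (p * q + c)).
  by rewrite ler_pM2l // => h; rewrite ler_pdivlMr //; lra.
rewrite (_ : _ * (2 * r) = 4 * Re (ip (X u) v)); last by rewrite Xuv; ring.
apply: le_trans (Re_ip_posop_le u v) _; rewrite (hnormD_sqr hip) hu hv.
rewrite (_ : _ * (M * _) = M * (2 * (p * q * r) ^+ 2 + 2 * (p * q * r * (r * c)))).
  by apply: (ler_wpM2l hM0); lra.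
by ring.
Qed.

Lemma normc_ip_posop_le_inf_dist2 B As x N :
  hn (As x) ^+ 2 + hn (B x) ^+ 2 <= N ->
  normc (ip (X (B x)) (As x)) <=
  M / 2 * (N - hn (As x) / (2 * hn (B x)) * inf_dist2 ip B As x).
Proof.
move=> hN; have N_ge0 : 0 <= N by apply: le_trans hN; rewrite addr_ge0 ?sqr_ge0.
have [Bx0|Bx_neq0] := eqVneq (hn (B x)) 0.
  rewrite Bx0 mulr0 invr0 mulr0 mul0r subr0 (hnorm_eq0 hip Bx0) (bounded_op0 hX) (ip0l hip).
  by rewrite normc0 mulr_ge0 ?divr_ge0.
have [Asx0|Asx_neq0] := eqVneq (hn (As x)) 0.
  rewrite Asx0 !mul0r subr0 (hnorm_eq0 hip Asx0) (ip0r hip).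
  by rewrite normc0 mulr_ge0 ?divr_ge0.
apply: le_trans (normc_ip_posop_le _ _) _; rewrite mulrAC ler_wpM2l ?divr_ge0 //.
apply: le_trans (mulD_le_sqrD_sub (hnorm_gt0 Asx_neq0) (hnorm_gt0 Bx_neq0)
  (inf_dist2_le hip B Asx_neq0)) _.
by rewrite lerD2r.
Qed.

Lemma cvg_normc_ip_posop_le A B As (x : nat -> H) (N w L : R) :
  is_adjoint ip A As ->
  (forall n, hn (As (x n)) ^+ 2 + hn (B (x n)) ^+ 2 <= N) ->
  (fun n => normc (ip (A (X (B (x n)))) (x n))) @ \oo --> w ->
  (fun n => hn (As (x n)) / (2 * hn (B (x n))) * inf_dist2 ip B As (x n)) @ \oo --> L ->
  w <= M / 2 * (N - L).
Proof.
move=> hAs hN hw hL.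
have hR : (fun n => M / 2 * (N - hn (As (x n)) / (2 * hn (B (x n))) * inf_dist2 ip B As (x n)))
    @ \oo --> M / 2 * (N - L).
  exact: cvgMl_tmp (cvgB (cvg_cst N) hL).
apply: (ler_cvg_to hw hR); apply: nearW => n.
by rewrite hAs; apply: normc_ip_posop_le_inf_dist2.
Qed.

End PositiveOperator.

Theorem theorem2p15 (R : realType) (H : lmodType R[i]) (ip : H -> H -> R[i])
    (hip : is_inner_product ip) (hcompl : hcomplete ip)
    (A B X As Bs : H -> H)
    (hA : bounded_op ip A) (hB : bounded_op ip B) (hX : bounded_op ip X)
    (hAs : is_adjoint ip A As) (hBs : is_adjoint ip B Bs)
    (hB0 : exists x : H, B x <> 0) (hXpos : positive_op ip X) :
  (forall (x : nat -> H) (L : R),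
      (forall n, hnorm ip (x n) = 1) ->
      (fun n => ComplexField.Normc.normc (ip (A (X (B (x n)))) (x n))) @ \oo -->
        numrad ip (fun y => A (X (B y))) ->
      (fun n => hnorm ip (As (x n)) / (2 * hnorm ip (B (x n)))
                * inf_dist2 ip B As (x n)) @ \oo --> L ->
      numrad ip (fun y => A (X (B y)))
        <= opnorm ip X / 2 * (opnorm ip (fun y => A (As y) + Bs (B y)) - L)
      /\ opnorm ip X / 2 * (opnorm ip (fun y => A (As y) + Bs (B y)) - L)
        <= opnorm ip X / 2 * opnorm ip (fun y => A (As y) + Bs (B y)))
  /\
  (forall (x : nat -> H) (L : R),
      (forall n, hnorm ip (x n) = 1) ->
      (fun n => ComplexField.Normc.normc (ip (A (B (x n))) (x n))) @ \oo -->
        numrad ip (fun y => A (B y)) ->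
      (fun n => hnorm ip (As (x n)) / (4 * hnorm ip (B (x n)))
                * inf_dist2 ip B As (x n)) @ \oo --> L ->
      numrad ip (fun y => A (B y))
        <= 1 / 2 * opnorm ip (fun y => A (As y) + Bs (B y)) - L
      /\ 1 / 2 * opnorm ip (fun y => A (As y) + Bs (B y)) - L
        <= 1 / 2 * opnorm ip (fun y => A (As y) + Bs (B y))).
Proof.
set N := opnorm ip (fun y => A (As y) + Bs (B y)).
have hN x : hnorm ip x = 1 -> hnorm ip (As x) ^+ 2 + hnorm ip (B x) ^+ 2 <= N.
  by move=> x1; have := sqr_hnorm_adjD_le hip x hA hB hAs hBs; rewrite x1 expr1n mulr1.
split=> x L x1 hw hL; have L_ge0 := cvg_inf_dist2_ge0 (ler0n _ _) hL.
- have M_ge0 := opnorm_ge0 hX.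
  split; last by rewrite ler_wpM2l ?divr_ge0 // gerBl.
  exact: (cvg_normc_ip_posop_le hip hX hXpos M_ge0 (Re_ip_le_opnorm hip hX) hAs
    (fun n => hN _ (x1 n)) hw hL).
split; last by rewrite gerBl.
have hI : bounded_op ip id by split => //; exists 1 => y; rewrite mul1r.
have hM z : Re (ip (id z) z) <= 1 * hnorm ip z ^+ 2 by rewrite mul1r (ipxx hip).
have hL2 : (fun n => hnorm ip (As (x n)) / (2 * hnorm ip (B (x n))) * inf_dist2 ip B As (x n))
    @ \oo --> 2 * L.
  rewrite (_ : (fun n => _) = (fun n => 2 * (hnorm ip (As (x n)) / (4 * hnorm ip (B (x n)))
    * inf_dist2 ip B As (x n)))); first exact: cvgMl_tmp hL.
  apply/funext => n; rewrite !invfM.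
  by move: (hnorm ip (As _)) (hnorm ip (B _))^-1 (inf_dist2 _ _ _ _) => a b c; field.
have := cvg_normc_ip_posop_le hip hI (ip_ge0 hip) ler01 hM hAs (fun n => hN _ (x1 n)) hw hL2.
by rewrite (_ : 1 / 2 * (N - 2 * L) = 1 / 2 * N - L) //; field.
Qed.
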